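(* Let $F:\mathcal A\to\mathcal B$ be a triangle functor between triangulated categories. Then $F$ satisfies condition (WSE) if and only if $F$ is objective. Here (WSE) means: for each morphism $v:Y\to Z$ in $\mathcal A$ such that $F(v)$ is a splitting epimorphism in $\mathcal B$, there exists an object $Z'$ and a morphism $v':Z'\to Y$ in $\mathcal A$ such that $F(vv')$ is an isomorphism in $\mathcal B$.
   Context: $F$ is objective if every morphism $f$ in $\mathcal A$ with $F(f)=0$ factors through an object $K$ with $F(K)=0$. A triangle functor is a pair $(F,\xi)$ with $F$ additive and $\xi:F[1]\to[1]F$ a natural isomorphism such that $F$ sends distinguished triangles $(X,Y,Z,u,v,w)$ to distinguished triangles $(F(X),F(Y),F(Z),F(u),F(v),\xi_XF(w))$. *)

Set Implicit Arguments.
Unset Strict Implicit.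

Record PreaddData := {
  Obj : Type;
  Hom : Obj -> Obj -> Type;
  idm : forall X, Hom X X;
  comp : forall X Y Z, Hom Y Z -> Hom X Y -> Hom X Z;   (* comp g f = g o f *)
  addm : forall X Y, Hom X Y -> Hom X Y -> Hom X Y;
  zerom : forall X Y, Hom X Y;
  oppm : forall X Y, Hom X Y -> Hom X Y
}.
Arguments Hom : clear implicits.
Arguments Obj : clear implicits.
Arguments idm {p} X.
Arguments comp {p X Y Z} g f.
Arguments addm {p X Y} f g.
Arguments zerom {p} X Y.
Arguments oppm {p X Y} f.

Section Cat.
Variable C : PreaddData.

Definition is_preadditive : Prop :=
  (forall X Y (f : Hom C X Y), comp (idm Y) f = f) /\
  (forall X Y (f : Hom C X Y), comp f (idm X) = f) /\
  (forall X Y Z W (f : Hom C X Y) (g : Hom C Y Z) (h : Hom C Z W),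
      comp h (comp g f) = comp (comp h g) f) /\
  (forall X Y (f g h : Hom C X Y), addm f (addm g h) = addm (addm f g) h) /\
  (forall X Y (f g : Hom C X Y), addm f g = addm g f) /\
  (forall X Y (f : Hom C X Y), addm f (zerom X Y) = f) /\
  (forall X Y (f : Hom C X Y), addm f (oppm f) = zerom X Y) /\
  (forall X Y Z (g : Hom C Y Z) (f1 f2 : Hom C X Y),
      comp g (addm f1 f2) = addm (comp g f1) (comp g f2)) /\
  (forall X Y Z (g1 g2 : Hom C Y Z) (f : Hom C X Y),
      comp (addm g1 g2) f = addm (comp g1 f) (comp g2 f)).

Definition is_iso X Y (f : Hom C X Y) : Prop :=
  exists g : Hom C Y X, comp g f = idm X /\ comp f g = idm Y.

Definition is_split_epi X Y (f : Hom C X Y) : Prop :=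
  exists s : Hom C Y X, comp f s = idm Y.

Definition is_zero_obj (K : Obj C) : Prop := idm K = zerom K K.

Definition is_additive : Prop :=
  is_preadditive /\
  (exists K : Obj C, is_zero_obj K) /\
  (forall X Y : Obj C, exists (P : Obj C) (i1 : Hom C X P) (i2 : Hom C Y P)
       (p1 : Hom C P X) (p2 : Hom C P Y),
      comp p1 i1 = idm X /\ comp p2 i2 = idm Y /\
      comp p1 i2 = zerom Y X /\ comp p2 i1 = zerom X Y /\
      addm (comp i1 p1) (comp i2 p2) = idm P).
End Cat.

Record Functor (A B : PreaddData) := {
  fobj : Obj A -> Obj B;
  fmap : forall X Y, Hom A X Y -> Hom B (fobj X) (fobj Y)
}.
Arguments fobj {A B} f X.
Arguments fmap {A B} f {X Y} _.

Definition is_additive_functor (A B : PreaddData) (F : Functor A B) : Prop :=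
  (forall X, fmap F (idm X) = idm (fobj F X)) /\
  (forall X Y Z (g : Hom A Y Z) (f : Hom A X Y),
      fmap F (comp g f) = comp (fmap F g) (fmap F f)) /\
  (forall X Y (f g : Hom A X Y), fmap F (addm f g) = addm (fmap F f) (fmap F g)).

Definition is_equivalence (A B : PreaddData) (F : Functor A B) : Prop :=
  (forall X Y (f g : Hom A X Y), fmap F f = fmap F g -> f = g) /\
  (forall X Y (h : Hom B (fobj F X) (fobj F Y)), exists f : Hom A X Y, fmap F f = h) /\
  (forall Y : Obj B, exists (X : Obj A) (i : Hom B (fobj F X) Y), is_iso i).

(* Triangulated categories (axioms TR1-TR4, Stacks Project 13.3.1)     *)
Record TriData := {
  tcat :> PreaddData;
  shift : Functor tcat tcat;
  dist : forall X Y Z (u : Hom tcat X Y) (v : Hom tcat Y Z)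
                      (w : Hom tcat Z (fobj shift X)), Prop
}.
Arguments dist {t X Y Z} u v w.

Notation "X [1]" := (fobj (shift _) X) (at level 2, format "X [1]").

Definition is_triangulated (T : TriData) : Prop :=
  is_additive T /\
  is_additive_functor (shift T) /\ is_equivalence (shift T) /\
  (* TR1 (a): closure under isomorphisms of triangles *)
  (forall X Y Z (u : Hom T X Y) (v : Hom T Y Z) (w : Hom T Z X[1])
          X' Y' Z' (u' : Hom T X' Y') (v' : Hom T Y' Z') (w' : Hom T Z' X'[1])
          (a : Hom T X X') (b : Hom T Y Y') (c : Hom T Z Z'),
      is_iso a -> is_iso b -> is_iso c ->
      comp u' a = comp b u -> comp v' b = comp c v ->
      comp w' c = comp (fmap (shift T) a) w ->
      dist u v w -> dist u' v' w') /\
  (forall X (K : Obj T), is_zero_obj K ->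
      dist (idm X) (zerom X K) (zerom K X[1])) /\
  (forall X Y (u : Hom T X Y), exists Z (v : Hom T Y Z) (w : Hom T Z X[1]),
      dist u v w) /\
  (* TR2: rotation *)
  (forall X Y Z (u : Hom T X Y) (v : Hom T Y Z) (w : Hom T Z X[1]),
      dist u v w <-> dist v w (oppm (fmap (shift T) u))) /\
  (* TR3: completion of morphisms of triangles *)
  (forall X Y Z (u : Hom T X Y) (v : Hom T Y Z) (w : Hom T Z X[1])
          X' Y' Z' (u' : Hom T X' Y') (v' : Hom T Y' Z') (w' : Hom T Z' X'[1])
          (a : Hom T X X') (b : Hom T Y Y'),
      dist u v w -> dist u' v' w' -> comp u' a = comp b u ->
      exists c : Hom T Z Z',
        comp v' b = comp c v /\ comp w' c = comp (fmap (shift T) a) w) /\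
  (* TR4: octahedral axiom *)
  (forall X Y Z (f : Hom T X Y) (g : Hom T Y Z)
          Q1 (p1 : Hom T Y Q1) (d1 : Hom T Q1 X[1])
          Q2 (p2 : Hom T Z Q2) (d2 : Hom T Q2 X[1])
          Q3 (p3 : Hom T Z Q3) (d3 : Hom T Q3 Y[1]),
      dist f p1 d1 -> dist (comp g f) p2 d2 -> dist g p3 d3 ->
      exists (a : Hom T Q1 Q2) (b : Hom T Q2 Q3),
        dist a b (comp (fmap (shift T) p1) d3) /\
        comp a p1 = comp p2 g /\ comp d2 a = d1 /\
        comp b p2 = p3 /\ comp d3 b = comp (fmap (shift T) f) d2).

Definition is_triangle_functor (A B : TriData) (F : Functor A B)
    (xi : forall X : Obj A, Hom B (fobj F X[1]) (fobj F X)[1]) : Prop :=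
  is_additive_functor F /\
  (forall X, is_iso (xi X)) /\
  (forall X Y (f : Hom A X Y),
      comp (xi Y) (fmap F (fmap (shift A) f)) = comp (fmap (shift B) (fmap F f)) (xi X)) /\
  (forall X Y Z (u : Hom A X Y) (v : Hom A Y Z) (w : Hom A Z X[1]),
      dist u v w -> dist (fmap F u) (fmap F v) (comp (xi X) (fmap F w))).

Definition objective (A B : PreaddData) (F : Functor A B) : Prop :=
  forall X Y (f : Hom A X Y), fmap F f = zerom (fobj F X) (fobj F Y) ->
    exists (K : Obj A) (g : Hom A X K) (h : Hom A K Y),
      is_zero_obj (fobj F K) /\ f = comp h g.

Definition WSE (A B : PreaddData) (F : Functor A B) : Prop :=
  forall Y Z (v : Hom A Y Z), is_split_epi (fmap F v) ->
    exists (Z' : Obj A) (v' : Hom A Z' Y), is_iso (fmap F (comp v v')).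

Arguments is_triangle_functor {A B} F xi.
Arguments objective {A B} F.
Arguments WSE {A B} F.

(* Both directions work with distinguished triangles, used as weak kernels and
   weak cokernels, together with the fact that a morphism is an isomorphism iff
   its cone is zero.

   (WSE => objective): if F(f) = 0 for f : X -> Y, put f into a triangle
   W -a-> X -f-> Y -> W[1].  Its image under F is distinguished, so F(f) = 0
   makes F(a) a split epimorphism; (WSE) gives a' with F(a a') invertible, hence
   the cone K of a a' satisfies F(K) = 0.  As f a a' = 0, f factors through K.

   (objective => WSE): if F(v) is a split epimorphism for v : Y -> Z, complete
   v to Y -v-> Z -w-> C -> Y[1].  Then F(w) = 0, so w factors as h g through
   some K with F(K) = 0.  Completing g to W -a-> Z -g-> K -> W[1] we get w a = 0,
   so a = v v'; and F(a) is invertible because its triangle has cone F(K) = 0. *)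

Set Implicit Arguments.
Unset Strict Implicit.

Section Preadditive.
Variable C : PreaddData.
Hypothesis HC : is_preadditive C.

Lemma comp_idm_l X Y (f : Hom C X Y) : comp (idm Y) f = f.
Proof. destruct HC as (E & _); apply E. Qed.

Lemma comp_idm_r X Y (f : Hom C X Y) : comp f (idm X) = f.
Proof. destruct HC as (_ & E & _); apply E. Qed.

Lemma comp_assoc X Y Z W (f : Hom C X Y) (g : Hom C Y Z) (h : Hom C Z W) :
  comp h (comp g f) = comp (comp h g) f.
Proof. destruct HC as (_ & _ & E & _); apply E. Qed.

Lemma addm_assoc X Y (f g h : Hom C X Y) : addm f (addm g h) = addm (addm f g) h.
Proof. destruct HC as (_ & _ & _ & E & _); apply E. Qed.

Lemma addm_comm X Y (f g : Hom C X Y) : addm f g = addm g f.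
Proof. destruct HC as (_ & _ & _ & _ & E & _); apply E. Qed.

Lemma addm_zerom_r X Y (f : Hom C X Y) : addm f (zerom X Y) = f.
Proof. destruct HC as (_ & _ & _ & _ & _ & E & _); apply E. Qed.

Lemma addm_oppm_r X Y (f : Hom C X Y) : addm f (oppm f) = zerom X Y.
Proof. destruct HC as (_ & _ & _ & _ & _ & _ & E & _); apply E. Qed.

Lemma comp_addm_r X Y Z (g : Hom C Y Z) (f1 f2 : Hom C X Y) :
  comp g (addm f1 f2) = addm (comp g f1) (comp g f2).
Proof. destruct HC as (_ & _ & _ & _ & _ & _ & _ & E & _); apply E. Qed.

Lemma comp_addm_l X Y Z (g1 g2 : Hom C Y Z) (f : Hom C X Y) :
  comp (addm g1 g2) f = addm (comp g1 f) (comp g2 f).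
Proof. destruct HC as (_ & _ & _ & _ & _ & _ & _ & _ & E); apply E. Qed.

Lemma addm_cancel_l X Y (f g h : Hom C X Y) : addm f g = addm f h -> g = h.
Proof.
  intro E.
  assert (E' : addm (oppm f) (addm f g) = addm (oppm f) (addm f h)) by now rewrite E.
  rewrite !addm_assoc, (addm_comm (oppm f) f), addm_oppm_r,
    (addm_comm _ g), (addm_comm _ h), !addm_zerom_r in E'.
  exact E'.
Qed.

Lemma addm_idem_zerom X Y (x : Hom C X Y) : addm x x = x -> x = zerom X Y.
Proof. intro E. apply (addm_cancel_l (f := x)). now rewrite addm_zerom_r. Qed.

Lemma comp_zerom_r X Y Z (f : Hom C Y Z) : comp f (zerom X Y) = zerom X Z.
Proof. apply addm_idem_zerom. now rewrite <- comp_addm_r, addm_zerom_r. Qed.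

Lemma comp_zerom_l X Y Z (f : Hom C X Y) : comp (zerom Y Z) f = zerom X Z.
Proof. apply addm_idem_zerom. now rewrite <- comp_addm_l, addm_zerom_r. Qed.

Lemma oppm_unique X Y (x y : Hom C X Y) : addm x y = zerom X Y -> y = oppm x.
Proof. rewrite <- (addm_oppm_r x). apply addm_cancel_l. Qed.

Lemma oppm_involutive X Y (x : Hom C X Y) : oppm (oppm x) = x.
Proof. symmetry. apply oppm_unique. rewrite addm_comm. apply addm_oppm_r. Qed.

Lemma oppm_zerom (X Y : Obj C) : oppm (zerom X Y) = zerom X Y.
Proof. symmetry. apply oppm_unique, addm_zerom_r. Qed.

Lemma oppm_eq_zerom X Y (x : Hom C X Y) : oppm x = zerom X Y -> x = zerom X Y.
Proof. intro E. now rewrite <- (oppm_involutive x), E, oppm_zerom. Qed.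

Lemma comp_oppm_r X Y Z (g : Hom C Y Z) (f : Hom C X Y) :
  comp g (oppm f) = oppm (comp g f).
Proof. apply oppm_unique. rewrite <- comp_addm_r, addm_oppm_r. apply comp_zerom_r. Qed.

Lemma comp_oppm_l X Y Z (g : Hom C Y Z) (f : Hom C X Y) :
  comp (oppm g) f = oppm (comp g f).
Proof. apply oppm_unique. rewrite <- comp_addm_l, addm_oppm_r. apply comp_zerom_l. Qed.

Lemma hom_to_zero_obj K X (f : Hom C X K) : is_zero_obj K -> f = zerom X K.
Proof. intro HK. rewrite <- (comp_idm_l f), HK. apply comp_zerom_l. Qed.

Lemma hom_from_zero_obj K X (f : Hom C K X) : is_zero_obj K -> f = zerom K X.
Proof. intro HK. rewrite <- (comp_idm_r f), HK. apply comp_zerom_r. Qed.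
End Preadditive.

Lemma fmap_zerom (A B : PreaddData) (G : Functor A B) :
  is_preadditive A -> is_preadditive B -> is_additive_functor G ->
  forall X Y, fmap G (zerom X Y) = zerom (fobj G X) (fobj G Y).
Proof.
  intros HA HB (_ & _ & Gadd) X Y.
  apply (addm_idem_zerom HB). now rewrite <- Gadd, (addm_zerom_r HA).
Qed.

Section Triangulated.
Variable T : TriData.
Hypothesis HT : is_triangulated T.

Lemma tri_preadditive : is_preadditive T.
Proof. destruct HT as ((H & _) & _). exact H. Qed.

Let HP := tri_preadditive.

Lemma tri_has_zero_obj : exists K : Obj T, is_zero_obj K.
Proof. destruct HT as ((_ & H & _) & _). exact H. Qed.

Lemma shift_additive : is_additive_functor (shift T).
Proof. destruct HT as (_ & H & _). exact H. Qed.

Lemma fmap_shift_idm (X : Obj T) : fmap (shift T) (idm X) = idm X[1].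
Proof. apply shift_additive. Qed.

Lemma fmap_shift_comp X Y Z (g : Hom T Y Z) (f : Hom T X Y) :
  fmap (shift T) (comp g f) = comp (fmap (shift T) g) (fmap (shift T) f).
Proof. apply shift_additive. Qed.

Lemma shift_faithful X Y (f g : Hom T X Y) : fmap (shift T) f = fmap (shift T) g -> f = g.
Proof. destruct HT as (_ & _ & (H & _) & _). apply H. Qed.

Lemma shift_full (X Y : Obj T) (h : Hom T X[1] Y[1]) : exists f : Hom T X Y, fmap (shift T) f = h.
Proof. destruct HT as (_ & _ & (_ & H & _) & _). apply H. Qed.

Lemma shift_ess_surj Y : exists X (i : Hom T X[1] Y), is_iso i.
Proof. destruct HT as (_ & _ & (_ & _ & H) & _). apply H. Qed.

Lemma dist_iso_closed X Y Z (u : Hom T X Y) (v : Hom T Y Z) (w : Hom T Z X[1])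
    X' Y' Z' (u' : Hom T X' Y') (v' : Hom T Y' Z') (w' : Hom T Z' X'[1])
    (a : Hom T X X') (b : Hom T Y Y') (c : Hom T Z Z') :
  is_iso a -> is_iso b -> is_iso c ->
  comp u' a = comp b u -> comp v' b = comp c v -> comp w' c = comp (fmap (shift T) a) w ->
  dist u v w -> dist u' v' w'.
Proof. destruct HT as (_ & _ & _ & H & _). apply H. Qed.

Lemma dist_trivial (X K : Obj T) : is_zero_obj K -> dist (idm X) (zerom X K) (zerom K X[1]).
Proof. destruct HT as (_ & _ & _ & _ & H & _). apply H. Qed.

Lemma dist_complete X Y (u : Hom T X Y) :
  exists Z (v : Hom T Y Z) (w : Hom T Z X[1]), dist u v w.
Proof. destruct HT as (_ & _ & _ & _ & _ & H & _). apply H. Qed.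

Lemma dist_rotate X Y Z (u : Hom T X Y) (v : Hom T Y Z) (w : Hom T Z X[1]) :
  dist u v w -> dist v w (oppm (fmap (shift T) u)).
Proof. destruct HT as (_ & _ & _ & _ & _ & _ & H & _). apply H. Qed.

Lemma dist_unrotate X Y Z (u : Hom T X Y) (v : Hom T Y Z) (w : Hom T Z X[1]) :
  dist v w (oppm (fmap (shift T) u)) -> dist u v w.
Proof. destruct HT as (_ & _ & _ & _ & _ & _ & H & _). apply H. Qed.

Lemma dist_morphism_complete X Y Z (u : Hom T X Y) (v : Hom T Y Z) (w : Hom T Z X[1])
    X' Y' Z' (u' : Hom T X' Y') (v' : Hom T Y' Z') (w' : Hom T Z' X'[1])
    (a : Hom T X X') (b : Hom T Y Y') :
  dist u v w -> dist u' v' w' -> comp u' a = comp b u ->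
  exists c : Hom T Z Z', comp v' b = comp c v /\ comp w' c = comp (fmap (shift T) a) w.
Proof. destruct HT as (_ & _ & _ & _ & _ & _ & _ & H & _). apply H. Qed.

Lemma dist_comp_zerom X Y Z (u : Hom T X Y) (v : Hom T Y Z) (w : Hom T Z X[1]) :
  dist u v w -> comp v u = zerom X Z.
Proof.
  intro D. destruct tri_has_zero_obj as [K HK].
  destruct (dist_morphism_complete (a := idm X) (b := u) (dist_trivial X HK) D eq_refl)
    as [c [E _]].
  rewrite E. apply (comp_zerom_r HP).
Qed.

(* Rotating to the left needs a preimage W of Z under the shift, which exists
   because the shift is an equivalence. *)
Lemma dist_rotate_left X Y Z (u : Hom T X Y) (v : Hom T Y Z) (w : Hom T Z X[1]) :
  dist u v w -> exists W (a : Hom T W X) (b : Hom T Y W[1]),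
    dist a u b /\ (w = zerom Z X[1] -> a = zerom W X).
Proof.
  intro D.
  destruct (shift_ess_surj Z) as [W [i [j [Eji Eij]]]].
  destruct (shift_full (oppm (comp w i))) as [a Ea].
  exists W, a, (comp j v). split.
  - apply dist_unrotate. rewrite Ea, (oppm_involutive HP).
    refine (dist_iso_closed (a := idm X) (b := idm Y) (c := j) _ _ _ _ _ _ D).
    + exists (idm X). split; apply (comp_idm_l HP).
    + exists (idm Y). split; apply (comp_idm_l HP).
    + exists i. split; assumption.
    + now rewrite (comp_idm_l HP), (comp_idm_r HP).
    + now rewrite (comp_idm_r HP).
    + now rewrite <- (comp_assoc HP), Eij, (comp_idm_r HP), fmap_shift_idm,
        (comp_idm_l HP).
  - intro Ew. apply shift_faithful.
    rewrite Ea, Ew, (comp_zerom_l HP), (oppm_zerom HP).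
    symmetry. apply (fmap_zerom HP HP shift_additive).
Qed.

Lemma dist_weak_cokernel X Y Z W (u : Hom T X Y) (v : Hom T Y Z) (w : Hom T Z X[1])
    (f : Hom T Y W) :
  dist u v w -> comp f u = zerom X W -> exists c : Hom T Z W, f = comp c v.
Proof.
  intros D Ef. destruct tri_has_zero_obj as [K HK].
  destruct (dist_rotate_left (dist_trivial W HK)) as [V [a [b [D' _]]]].
  destruct (dist_morphism_complete (a := zerom X V) (b := f) D D') as [c [E _]].
  - rewrite Ef. apply (comp_zerom_r HP).
  - exists c. now rewrite <- E, (comp_idm_l HP).
Qed.

Lemma dist_weak_kernel X Y Z W (u : Hom T X Y) (v : Hom T Y Z) (w : Hom T Z X[1])
    (g : Hom T W Y) :
  dist u v w -> comp v g = zerom W Z -> exists g' : Hom T W X, g = comp u g'.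
Proof.
  intros D Eg. destruct tri_has_zero_obj as [K HK].
  destruct (dist_morphism_complete (a := g) (b := zerom K Z)
              (dist_rotate (dist_trivial W HK)) (dist_rotate D)) as [c [_ E]].
  - rewrite Eg. symmetry. apply (comp_zerom_r HP).
  - rewrite (comp_oppm_l HP), (comp_oppm_r HP), fmap_shift_idm, (comp_idm_r HP) in E.
    apply (f_equal oppm) in E. rewrite !(oppm_involutive HP) in E.
    destruct (shift_full c) as [g' Eg'].
    exists g'. apply shift_faithful.
    rewrite fmap_shift_comp, Eg'. exact (eq_sym E).
Qed.

Lemma dist_iso_cone_zero X Y Z (u : Hom T X Y) (v : Hom T Y Z) (w : Hom T Z X[1]) :
  dist u v w -> is_iso u -> is_zero_obj Z.
Proof.
  intros D [u' [Eu'u Euu']].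
  assert (Ev : v = zerom Y Z).
  { rewrite <- (comp_idm_r HP v), <- Euu', (comp_assoc HP), (dist_comp_zerom D).
    apply (comp_zerom_l HP). }
  pose proof (dist_rotate D) as D'.
  assert (Ew : w = zerom Z X[1]).
  { pose proof (dist_comp_zerom (dist_rotate D')) as E.
    rewrite (comp_oppm_l HP) in E. apply (oppm_eq_zerom HP) in E.
    rewrite <- (comp_idm_l HP w), <- fmap_shift_idm, <- Eu'u, fmap_shift_comp,
      <- (comp_assoc HP), E.
    apply (comp_zerom_r HP). }
  destruct (dist_weak_cokernel (f := idm Z) D') as [c Ec].
  - now rewrite (comp_idm_l HP).
  - unfold is_zero_obj. rewrite Ec, Ew. apply (comp_zerom_r HP).
Qed.

Lemma dist_cone_zero_iso X Y Z (u : Hom T X Y) (v : Hom T Y Z) (w : Hom T Z X[1]) :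
  dist u v w -> is_zero_obj Z -> is_iso u.
Proof.
  intros D HZ.
  destruct (dist_weak_kernel (g := idm Y) D) as [u' Eu'].
  { rewrite (hom_to_zero_obj HP v HZ). apply (comp_zerom_l HP). }
  destruct (dist_rotate_left D) as [W [a [b [D' Ea]]]].
  specialize (Ea (hom_from_zero_obj HP w HZ)).
  destruct (dist_weak_kernel (g := addm (idm X) (oppm (comp u' u))) D') as [e Ee].
  - rewrite (comp_addm_r HP), (comp_oppm_r HP), (comp_assoc HP), <- Eu',
      (comp_idm_l HP), (comp_idm_r HP).
    apply (addm_oppm_r HP).
  - rewrite Ea, (comp_zerom_l HP) in Ee.
    exists u'. split; [|symmetry; exact Eu'].
    rewrite <- (oppm_involutive HP (comp u' u)), (oppm_unique HP Ee).
    apply (oppm_involutive HP).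
Qed.
End Triangulated.

Section TriangleFunctor.
Variables A B : TriData.
Hypothesis HA : is_triangulated A.
Hypothesis HB : is_triangulated B.
Variable F : Functor A B.
Variable xi : forall X : Obj A, Hom B (fobj F X[1]) (fobj F X)[1].
Hypothesis HF : is_triangle_functor F xi.

Let HPA := tri_preadditive HA.
Let HPB := tri_preadditive HB.

Lemma fmap_comp X Y Z (g : Hom A Y Z) (f : Hom A X Y) :
  fmap F (comp g f) = comp (fmap F g) (fmap F f).
Proof. destruct HF as ((_ & H & _) & _). apply H. Qed.

Lemma fmap_dist X Y Z (u : Hom A X Y) (v : Hom A Y Z) (w : Hom A Z X[1]) :
  dist u v w -> dist (fmap F u) (fmap F v) (comp (xi X) (fmap F w)).
Proof. destruct HF as (_ & _ & _ & H). apply H. Qed.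

Lemma objective_of_WSE : WSE F -> objective F.
Proof.
  intros HW X Y f Ef.
  destruct (dist_complete HA f) as [Z [v [w D]]].
  destruct (dist_rotate_left HA D) as [W [a [b [Da _]]]].
  destruct (dist_weak_kernel HB (g := idm (fobj F X)) (fmap_dist Da)) as [s Es].
  { now rewrite (comp_idm_r HPB). }
  destruct (HW _ _ a (ex_intro _ s (eq_sym Es))) as [Z' [a' Ea']].
  destruct (dist_complete HA (comp a a')) as [K [g [h Dg]]].
  destruct (dist_weak_cokernel HA (f := f) Dg) as [c Ec].
  { rewrite (comp_assoc HPA), (dist_comp_zerom HA Da). apply (comp_zerom_l HPA). }
  exists K, g, c. split; [|exact Ec].
  exact (dist_iso_cone_zero HB (fmap_dist Dg) Ea').
Qed.

Lemma WSE_of_objective : objective F -> WSE F.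
Proof.
  intros HO Y Z v [s Es].
  destruct (dist_complete HA v) as [C [w [x D]]].
  assert (Ew : fmap F w = zerom (fobj F Z) (fobj F C)).
  { rewrite <- (comp_idm_r HPB (fmap F w)), <- Es, (comp_assoc HPB), <- fmap_comp,
      (dist_comp_zerom HA D), (fmap_zerom HPA HPB (proj1 HF)).
    apply (comp_zerom_l HPB). }
  destruct (HO _ _ w Ew) as [K [g [h [HK Egh]]]].
  destruct (dist_complete HA g) as [M [m [n Dg]]].
  destruct (dist_rotate_left HA Dg) as [W [a [b [Da _]]]].
  destruct (dist_weak_kernel HA (g := a) D) as [v' Ev'].
  { rewrite Egh, <- (comp_assoc HPA), (dist_comp_zerom HA Da).
    apply (comp_zerom_r HPA). }
  exists W, v'. rewrite <- Ev'.
  exact (dist_cone_zero_iso HB (fmap_dist Da) HK).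
Qed.
End TriangleFunctor.

Theorem theorem1 (A B : TriData) (F : Functor A B)
    (xi : forall X : Obj A, Hom B (fobj F (fobj (shift A) X)) (fobj (shift B) (fobj F X))) :
  is_triangulated A -> is_triangulated B -> is_triangle_functor F xi ->
  (WSE F <-> objective F).
Proof.
  intros HA HB HF. split.
  - exact (objective_of_WSE HA HB HF).
  - exact (WSE_of_objective HA HB HF).
Qed.
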